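(* Let $q\in\mathbb{C}^\times$ be not a root of unity and $Q\in\mathbb{C}^\times$. (i) For $\varphi,\varphi'\in\mathbb{C}[x]\setminus\{0\}$ with $\deg\varphi\ge\deg\varphi'$, one has $\mathbf{u}^{\langle Q\rangle}(\varphi)=\mathbf{u}^{\langle Q\rangle}(\varphi')$ if and only if $$\varphi=q^{-(\deg\varphi-\deg\varphi')}\,\varphi'\prod_{z=1}^{\deg\varphi-\deg\varphi'}\big(x-q^{-2(z-1)}\beta_\varphi^{-2}Q^{-1}\big).$$ (ii) The restriction of $\mathbf{u}^{\langle Q\rangle}$ to $\mathbb{C}[x]^{\langle Q\rangle}$ is injective, and for every nonzero $\varphi\in\mathbb{C}[x]$ there exists a unique $\varphi'\in\mathbb{C}[x]^{\langle Q\rangle}$ with $\mathbf{u}^{\langle Q\rangle}(\varphi)=\mathbf{u}^{\langle Q\rangle}(\varphi')$.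
   Context: For $t,k>0$, $p_t(q)(x_1,\dots,x_k)=\sum_{\lambda\vdash t,\ \ell(\lambda)\le k}q^{-\ell(\lambda)}(q-q^{-1})^{\ell(\lambda)-1}m_\lambda(x_1,\dots,x_k)$, where $m_\lambda$ is the monomial symmetric polynomial and $\ell(\lambda)$ the number of nonzero parts. For $\beta\in\mathbb{C}^\times$ put $\tilde\beta=(q-q^{-1})^{-1}(1-\beta^{-2})$ and $p^{\langle Q\rangle}_t(q;\beta)(x_1,\dots,x_k)=p_t(q)(x_1,\dots,x_k)+\tilde\beta Q^{-t}+(q-q^{-1})\sum_{z=1}^{t-1}\tilde\beta Q^{-t+z}p_z(q)(x_1,\dots,x_k)$. For nonzero $\varphi=\beta_\varphi(x-\gamma_1)\cdots(x-\gamma_k)\in\mathbb{C}[x]$ ($\beta_\varphi$ the leading coefficient), with $\tilde\beta_\varphi=(q-q^{-1})^{-1}(1-\beta_\varphi^{-2})$, define $\mathbf{u}^{\langle Q\rangle}(\varphi)\in\mathbb{C}^\times\times\prod_{t>0}\mathbb{C}$ to be $(\beta_\varphi,(\tilde\beta_\varphi Q^{-t})_{t>0})$ if $\deg\varphi=0$ and $(\beta_\varphi q^{\deg\varphi},(p^{\langle Q\rangle}_t(q;\beta_\varphi)(\gamma_1,\dots,\gamma_k))_{t>0})$ if $\deg\varphi>0$. Let $\mathbb{C}[x]^{\langle Q\rangle}=\{\varphi\in\mathbb{C}[x]\setminus\{0\}:\beta_\varphi^{-2}Q^{-1}\text{ is not a root of }\varphi\}$. *)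

From HB Require Import structures.
From mathcomp Require Import all_boot all_order all_algebra.
From mathcomp Require Import complex.
From mathcomp Require Import reals.
Set Implicit Arguments. Unset Strict Implicit. Unset Printing Implicit Defensive.
Import Order.TTheory GRing.Theory Num.Theory.
Local Open Scope ring_scope.

Section Defs.
Variable F : closedFieldType.

(* A partition lambda of t with at most k parts is represented by the
   nonincreasing k-vector (lambda_1 >= ... >= lambda_k >= 0) summing to t
   (padding with zeros).  Entries are bounded by t. *)
Definition is_part (k t : nat) (lam : {ffun 'I_k -> 'I_t.+1}) : bool :=
  [forall i : 'I_k, forall j : 'I_k, (i <= j)%N ==> (lam j <= lam i)%N]
  && (\sum_(i < k) (lam i : nat) == t)%N.

Definition plen (k t : nat) (lam : {ffun 'I_k -> 'I_t.+1}) : nat :=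
  #|[pred i : 'I_k | (lam i : nat) != 0%N]|.

Definition msym_eval (k t : nat) (lam : {ffun 'I_k -> 'I_t.+1}) (x : 'I_k -> F) : F :=
  \sum_(alpha : {ffun 'I_k -> 'I_t.+1} | perm_eq (codom alpha) (codom lam))
     \prod_(i < k) x i ^+ alpha i.

Definition p_t (q : F) (t : nat) (xs : seq F) : F :=
  \sum_(lam : {ffun 'I_(size xs) -> 'I_t.+1} | is_part lam)
     q ^- plen lam * (q - q^-1) ^+ (plen lam).-1
       * msym_eval lam (fun i => nth 0 xs i).

Definition btilde (q b : F) : F := (q - q^-1)^-1 * (1 - b ^- 2).

Definition pQ_t (Q q b : F) (t : nat) (xs : seq F) : F :=
  p_t q t xs + btilde q b * Q ^- t
  + (q - q^-1) * \sum_(1 <= z < t) btilde q b * Q ^- (t - z) * p_t q z xs.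

(* the roots gamma_1, ..., gamma_k of phi (with multiplicity), chosen so that
   phi = beta_phi (x - gamma_1) ... (x - gamma_k) *)
Definition roots_of (phi : {poly F}) : seq F := sval (closed_field_poly_normal phi).

(* u^{<Q>}(phi) in C^x * prod_{t>0} C; the sequence component s encodes
   (a_t)_{t>0} via s n = a_{n+1}. *)
Definition uQ (Q q : F) (phi : {poly F}) : F * (nat -> F) :=
  let b := lead_coef phi in
  if (size phi).-1 == 0%N then (b, fun n => btilde q b * Q ^- n.+1)
  else (b * q ^+ (size phi).-1, fun n => pQ_t Q q b n.+1 (roots_of phi)).

Definition inCQ (Q : F) (phi : {poly F}) : bool :=
  (phi != 0) && ~~ root phi ((lead_coef phi) ^- 2 * Q^-1).

End Defs.

(* Write c = q - q^-1.  Summing monomial symmetric functions over all partitions is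
   summing over all compositions, so c p_t(q)(x) is the coefficient of T^t in
   prod_i (1 - q^-2 x_i T) / (1 - x_i T), and c p^<Q>_t(q; beta)(x) is the coefficient of
   the same series times (1 - beta^-2 Q^-1 T) / (1 - Q^-1 T); power series are handled
   through their truncations modulo T^(N+1).  Hence u^<Q>(phi) = u^<Q>(phi') iff the first
   components agree and, clearing denominators, a polynomial identity between the roots
   of phi and phi' holds.  The factors 1 - beta^-2 Q^-1 T telescope along the string
   beta^-2 Q^-1, q^-2 beta^-2 Q^-1, ..., so this identity says that the roots of phi are
   those of phi' together with the string, because
     prod_(x in X) (1 - q^-2 x T) * prod_(y in Y) (1 - y T) = (same with X, Y swapped)
   forces X = Y for multisets of equal size: as q is not a root of unity, some nonzero w
   in X + Y has q^2 w outside X + Y, evaluating at T = w^-1 puts w in both X and Y, and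
   cancelling it gives an induction.  For (ii), the first element beta^-2 Q^-1 of the
   string is a root of phi, which C[x]^<Q> excludes, and splitting it off phi lowers the
   degree without changing u^<Q>. *)

From HB Require Import structures.
From mathcomp Require Import all_boot all_order all_algebra.
From mathcomp Require Import complex reals boolp.
From mathcomp Require Import zify ring.
Set Implicit Arguments. Unset Strict Implicit. Unset Printing Implicit Defensive.
Import Order.TTheory GRing.Theory Num.Theory.
Local Open Scope ring_scope.

Section Partitions.
Variables k t : nat.
Local Notation vec := {ffun 'I_k -> 'I_t.+1}.
Implicit Types a l : vec.

Lemma sum_ffun_codom a : (\sum_(i < k) a i = \sum_(m <- codom a) m)%N.
Proof. by rewrite codomE big_map big_enum. Qed.

Lemma is_part_sorted l : is_part l -> sorted >=%O (codom l).
Proof.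
case/andP=> /forallP l_noninc _; rewrite codomE sorted_map.
have: sorted (relpre val leq) (enum 'I_k).
  by rewrite -sorted_map val_enum_ord iota_sorted.
apply: sub_sorted => i j /= le_ij; rewrite leEord.
exact: (implyP (forallP (l_noninc i) j)).
Qed.

Lemma is_part_perm_eq l l' :
  is_part l -> is_part l' -> perm_eq (codom l) (codom l') -> l = l'.
Proof.
move=> part_l part_l' /(sorted_eq ge_trans ge_anti (is_part_sorted part_l)).
move=> /(_ (is_part_sorted part_l')); rewrite !codomE => /eq_in_map eq_ll'.
by apply/ffunP => i; apply: eq_ll'; rewrite mem_enum.
Qed.

Lemma codom_ffun_nth (s : seq 'I_t.+1) :
  size s = k -> codom [ffun i : 'I_k => nth ord0 s i] = s.
Proof.
move=> size_s; rewrite codomE -[RHS](mkseq_nth ord0) /mkseq size_s -val_enum_ord -map_comp.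
by apply: eq_map => i /=; rewrite ffunE.
Qed.

Lemma exists_is_part_perm a : (\sum_(i < k) a i)%N = t ->
  exists2 l : vec, is_part l & perm_eq (codom a) (codom l).
Proof.
move=> sum_a; set s := sort >=%O (codom a).
have size_s : size s = k by rewrite size_sort size_codom card_ord.
have perm_s : perm_eq s (codom a) by rewrite perm_sort.
exists [ffun i : 'I_k => nth ord0 s i]; last by rewrite codom_ffun_nth // perm_sym.
apply/andP; split.
  apply/forallP => i; apply/forallP => j; apply/implyP => le_ij; rewrite !ffunE.
  by apply: (sorted_leq_nth ge_trans ge_refl ord0 (sort_sorted ge_total _)) le_ij;
     rewrite inE size_s.
by rewrite sum_ffun_codom codom_ffun_nth // (perm_big _ perm_s) -sum_ffun_codom sum_a.
Qed.

Lemma sum_is_part_perm (R : nmodType) (G : vec -> R) :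
  \sum_(l : vec | is_part l) \sum_(a : vec | perm_eq (codom a) (codom l)) G a
  = \sum_(a : vec | (\sum_(i < k) a i)%N == t) G a.
Proof.
rewrite (exchange_big_dep (fun a : vec => (\sum_(i < k) a i)%N == t)) /=; last first.
  move=> l a /andP[_ /eqP sum_l] perm_al.
  apply/eqP; apply: etrans sum_l; rewrite !sum_ffun_codom; exact: perm_big.
apply: eq_bigr => a /eqP /exists_is_part_perm[l part_l perm_al].
rewrite (big_pred1 l) // => l' /=; apply/andP/eqP => [[part_l' perm_al'] | ->//].
apply: is_part_perm_eq part_l' part_l _.
by rewrite perm_sym in perm_al'; apply: perm_trans perm_al.
Qed.

Lemma plen_count l : plen l = count (fun m : 'I_t.+1 => m != 0%N :> nat) (codom l).
Proof.
rewrite /plen -sum1_card -sum1_count codomE big_map big_enum_cond /=.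
by apply: eq_bigl => i; rewrite inE.
Qed.

Lemma plen_perm_eq a l : perm_eq (codom a) (codom l) -> plen a = plen l.
Proof. by rewrite !plen_count => /permP. Qed.

Lemma plen_gt0 l : is_part l -> (0 < t)%N -> (0 < plen l)%N.
Proof.
case/andP=> _ /eqP sum_l t_gt0; rewrite plen_count -has_count; apply/hasP.
have : (\sum_(m <- codom l) m)%N != 0%N by rewrite -sum_ffun_codom sum_l -lt0n.
rewrite sum_nat_seq_eq0 => /allPn[m ml /= m_neq0]; by exists m.
Qed.

End Partitions.

Lemma coef_prod_poly (R : comNzRingType) (k t : nat) (c : 'I_k -> nat -> R) :
  (\prod_(i < k) \poly_(m < t.+1) c i m)`_t =
  \sum_(a : {ffun 'I_k -> 'I_t.+1} | (\sum_(i < k) a i)%N == t) \prod_(i < k) c i (a i).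
Proof.
have polyE i : \poly_(m < t.+1) c i m = \sum_(j : 'I_t.+1) (c i j)%:P * 'X^j.
  by rewrite poly_def; apply: eq_bigr => j _; rewrite mul_polyC.
under eq_bigr do rewrite polyE.
rewrite bigA_distr_bigA coef_sum [RHS]big_mkcond; apply: eq_bigr => a _.
rewrite big_split -rmorph_prod prodrXr coefCM coefXn eq_sym.
by case: eqP; rewrite ?mulr1 ?mulr0.
Qed.

Section PolyCongruence.
Variable R : nzRingType.
Implicit Types p r : {poly R}.

Definition eqmodX N p r := forall j, (j <= N)%N -> p`_j = r`_j.

Lemma eqmodX_refl N p : eqmodX N p p.
Proof. by []. Qed.

Lemma eqmodX_sym N p r : eqmodX N p r -> eqmodX N r p.
Proof. by move=> eq_pr j le_jN; rewrite eq_pr. Qed.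

Lemma eqmodX_trans N p r s : eqmodX N p r -> eqmodX N r s -> eqmodX N p s.
Proof. by move=> eq_pr eq_rs j le_jN; rewrite eq_pr ?eq_rs. Qed.

Lemma eqmodX_mul N p p' r r' :
  eqmodX N p p' -> eqmodX N r r' -> eqmodX N (p * r) (p' * r').
Proof.
move=> eq_p eq_r j le_jN; rewrite !coefM; apply: eq_bigr => i _.
by rewrite eq_p ?eq_r //; have := ltn_ord i; lia.
Qed.

Lemma eqmodX_eq p r : (forall N, eqmodX N p r) -> p = r.
Proof. by move=> eq_pr; apply/polyP => j; apply: (eq_pr j). Qed.

End PolyCongruence.

Lemma eqmodX_mul2l (R : idomainType) N (r p p' : {poly R}) :
  r`_0 != 0 -> eqmodX N (r * p) (r * p') -> eqmodX N p p'.
Proof.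
move=> r0_neq0 eq_rp j; elim/ltn_ind: j => j IH le_jN; apply/eqP; rewrite -subr_eq0 -coefB.
have : (r * (p - p'))`_j = 0 by rewrite mulrBr coefB eq_rp ?subrr.
rewrite coefM big_ord_recl subn0 big1 ?addr0 => [/eqP|i _].
  by rewrite mulf_eq0 (negPf r0_neq0).
by rewrite coefB IH ?subrr ?mulr0 // lift0; have := ltn_ord i; lia.
Qed.

Definition onemX (R : nzRingType) (a : R) : {poly R} := 1 - a%:P * 'X.

Lemma coef0_onemX (R : nzRingType) (a : R) : (onemX a)`_0 = 1.
Proof. by rewrite coefB coef1 coefCM coefX mulr0 subr0. Qed.

Lemma onemX_neq0 (R : nzRingType) (a : R) : onemX a != 0.
Proof. by apply: contra_neq (@oner_neq0 R) => eq0; rewrite -(coef0_onemX a) eq0 coef0. Qed.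

Section QRatioFactors.
Variables (F : fieldType) (q : F).
Implicit Types (X Y : seq F) (a u w : F).

(* Numerator and denominator of prod_(x in X) (1 - q^-2 x T) / (1 - x T). *)
Definition hden X : {poly F} := \prod_(x <- X) onemX x.
Definition hnum X : {poly F} := \prod_(x <- X) onemX (q ^- 2 * x).

Lemma coef0_hden X : (hden X)`_0 = 1.
Proof. by rewrite coef0_prod big1 // => x _; rewrite coef0_onemX. Qed.

Lemma horner_onemX a u : (onemX a).[u] = 1 - a * u.
Proof. by rewrite !hornerE. Qed.

Lemma hden_horner_eq0 X u : ((hden X).[u] == 0) = has (fun x => x * u == 1) X.
Proof.
rewrite horner_prod prodf_seq_eq0; apply: eq_has => x /=.
by rewrite horner_onemX subr_eq0 eq_sym.
Qed.

Lemma hnum_horner_eq0 X u : ((hnum X).[u] == 0) = has (fun x => q ^- 2 * x * u == 1) X.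
Proof.
rewrite horner_prod prodf_seq_eq0; apply: eq_has => x /=.
by rewrite horner_onemX subr_eq0 eq_sym.
Qed.

Lemma hden_cat X Y : hden (X ++ Y) = hden X * hden Y.
Proof. exact: big_cat. Qed.

Lemma hnum_cat X Y : hnum (X ++ Y) = hnum X * hnum Y.
Proof. exact: big_cat. Qed.

Lemma hden_rem X w : w \in X -> hden X = onemX w * hden (rem w X).
Proof. by move=> wX; rewrite /hden (perm_big _ (perm_to_rem wX)) big_cons. Qed.

Lemma hnum_rem X w : w \in X -> hnum X = onemX (q ^- 2 * w) * hnum (rem w X).
Proof. by move=> wX; rewrite /hnum (perm_big _ (perm_to_rem wX)) big_cons. Qed.

Definition qgeom (a : F) (d : nat) : seq F := [seq q ^- (2 * i) * a | i <- iota 0 d].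

Lemma qgeomS a d : qgeom a d.+1 = a :: qgeom (q ^- 2 * a) d.
Proof.
rewrite /qgeom /= muln0 expr0 invr1 mul1r -[1%N]addn0 iotaDl -map_comp.
by congr (_ :: _); apply: eq_map => i /=; rewrite mulrA -invfM -exprD mulnDr addnC.
Qed.

Lemma hnum_qgeom a d :
  hnum (qgeom a d) * onemX a = hden (qgeom a d) * onemX (q ^- (2 * d) * a).
Proof.
elim: d a => [|d IH] a; first by rewrite /hnum /hden !big_nil muln0 expr0 invr1 mul1r.
rewrite qgeomS /hnum /hden !big_cons -/(hnum _) -/(hden _).
have -> : q ^- (2 * d.+1) * a = q ^- (2 * d) * (q ^- 2 * a).
  by rewrite mulrA -invfM -exprD mulnS addnC.
by rewrite -[RHS]mulrA -IH; ring.
Qed.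

Lemma hnum_hden_qgeom_cat X X' a d :
  hnum X * onemX a * hden X' = hnum X' * onemX (q ^- (2 * d) * a) * hden X <->
  hnum X * hden (X' ++ qgeom a d) = hnum (X' ++ qgeom a d) * hden X.
Proof.
have hden_neq0 Y : hden Y != 0.
  by apply: contra_neq (@oner_neq0 F) => Y0; rewrite -(coef0_hden Y) Y0 coef0.
rewrite hnum_cat hden_cat; split=> eq_cross.
  apply: (mulIf (onemX_neq0 a)).
  transitivity (hnum X * onemX a * hden X' * hden (qgeom a d)); first by ring.
  rewrite eq_cross.
  transitivity (hnum X' * (hden (qgeom a d) * onemX (q ^- (2 * d) * a)) * hden X).
    by ring.
  by rewrite -hnum_qgeom; ring.
apply: (mulIf (hden_neq0 (qgeom a d))).
transitivity (hnum X * (hden X' * hden (qgeom a d)) * onemX a); first by ring.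
rewrite eq_cross.
transitivity (hnum X' * (hden (qgeom a d) * onemX (q ^- (2 * d) * a)) * hden X).
  by rewrite -hnum_qgeom; ring.
by ring.
Qed.

Lemma not_root1_expr_inj (r : F) :
  r != 0 -> (forall n, (0 < n)%N -> r ^+ n != 1) -> injective (GRing.exp r).
Proof.
move=> r_neq0 r_not1.
have lt_neq m n : (m < n)%N -> r ^+ m != r ^+ n.
  move=> lt_mn; rewrite -(subnKC (ltnW lt_mn)) exprD -{1}[r ^+ m]mulr1.
  by rewrite (inj_eq (mulfI (expf_neq0 m r_neq0))) eq_sym r_not1 // subn_gt0.
move=> m n eq_mn; apply/eqP; apply: contraT; rewrite neq_ltn => /orP[] /lt_neq.
  by rewrite eq_mn eqxx.
by rewrite eq_mn eqxx.
Qed.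

Lemma exists_mul_notin (r : F) (S : seq F) :
  r != 0 -> (forall n, (0 < n)%N -> r ^+ n != 1) -> has (predC1 0) S ->
  exists2 w, w \in S & (w != 0) && (r * w \notin S).
Proof.
move=> r_neq0 r_not1 /hasP[w0 w0S /= w0_neq0].
have [/hasP[w wS nw] | /hasPn S_stable] := boolP (has (fun w => (w != 0) && (r * w \notin S)) S).
  by exists w.
have pow_in m : r ^+ m * w0 \in S.
  elim: m => [|m IH]; first by rewrite mul1r.
  have := S_stable _ IH; rewrite (mulf_neq0 (expf_neq0 m r_neq0) w0_neq0) /= negbK.
  by rewrite exprS -mulrA.
have pow_inj : injective (fun m => r ^+ m * w0).
  exact: inj_comp (mulIf w0_neq0) (not_root1_expr_inj r_neq0 r_not1).
have sub_S : {subset mkseq (fun m => r ^+ m * w0) (size S).+1 <= S}.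
  by move=> x /mapP[m _ ->].
by have := uniq_leq_size (mkseq_uniq _ pow_inj) sub_S; rewrite size_mkseq ltnn.
Qed.

Hypotheses (q_neq0 : q != 0) (q_not_root1 : forall n, (0 < n)%N -> q ^+ n != 1).

Lemma hnum_hden_mem X Y w : w != 0 -> w \in X -> q ^+ 2 * w \notin X ->
  hnum X * hden Y = hnum Y * hden X -> w \in Y.
Proof.
move=> w_neq0 wX q2w_X /(congr1 (horner^~ w^-1)) /=; rewrite !hornerM.
have -> : (hden X).[w^-1] = 0.
  by apply/eqP; rewrite hden_horner_eq0; apply/hasP; exists w; rewrite ?mulfV.
rewrite mulr0 => /eqP; rewrite mulf_eq0 => /orP[].
  rewrite hnum_horner_eq0 => /hasP[x xX /eqP x_eq].
  suff x_q2w : x = q ^+ 2 * w by rewrite -x_q2w xX in q2w_X.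
  by rewrite -[RHS]mulr1 -x_eq; field; rewrite q_neq0 w_neq0.
rewrite hden_horner_eq0 => /hasP[y yY /eqP y_eq].
by have <- : y = w by rewrite -[RHS]mulr1 -y_eq mulrCA mulfV ?mulr1.
Qed.

Lemma hnum_hden_perm X Y : size X = size Y ->
  hnum X * hden Y = hnum Y * hden X -> perm_eq X Y.
Proof.
have [n] := ubnP (size X); elim: n X Y => // n IH X Y; rewrite ltnS => size_X size_XY E.
have [nz_XY | /hasPn zero_XY] := boolP (has (predC1 0) (X ++ Y)); last first.
  have all0 Z : {subset Z <= X ++ Y} -> all (pred1 0) Z.
    by move=> sub_Z; apply/allP => x /sub_Z /zero_XY /negPn.
  have /all_pred1P -> : all (pred1 0) X by apply: all0 => x; rewrite mem_cat => ->.
  have /all_pred1P -> : all (pred1 0) Y by apply: all0 => y; rewrite mem_cat orbC => ->.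
  by rewrite size_XY.
have q2_not_root1 m : (0 < m)%N -> (q ^+ 2) ^+ m != 1.
  by move=> m_gt0; rewrite -exprM q_not_root1 // muln_gt0.
have [w w_XY /andP[w_neq0]] := exists_mul_notin (expf_neq0 2 q_neq0) q2_not_root1 nz_XY.
rewrite mem_cat negb_or => /andP[q2w_X q2w_Y].
have [wX wY] : w \in X /\ w \in Y.
  move: w_XY; rewrite mem_cat => /orP[wX | wY].
    by split; last exact: (hnum_hden_mem w_neq0 wX q2w_X E).
  by split; first exact: (hnum_hden_mem w_neq0 wY q2w_Y (esym E)).
apply: perm_trans (perm_to_rem wX) _; rewrite perm_sym.
apply: perm_trans (perm_to_rem wY) _; rewrite perm_cons perm_sym.
have X_gt0 : (0 < size X)%N by case: (X) wX.
apply: IH; rewrite ?size_rem ?size_XY //; first by move: size_X X_gt0; lia.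
apply: (mulfI (mulf_neq0 (onemX_neq0 (q ^- 2 * w)) (onemX_neq0 w))).
move: E; rewrite (hnum_rem wX) (hnum_rem wY) (hden_rem wX) (hden_rem wY) => E.
by rewrite mulrACA E mulrACA.
Qed.

End QRatioFactors.

Section GeneratingSeries.
Variables (F : closedFieldType) (q Q : F).
Implicit Types (xs : seq F) (b x : F).

(* hpoly and bpoly truncate (1 - q^-2 x T) / (1 - x T) = 1 + sum_(m > 0) q^-1 (q - q^-1) x^m T^m
   and (1 - b^-2 Q^-1 T) / (1 - Q^-1 T) = 1 + sum_(m > 0) (1 - b^-2) Q^-m T^m. *)
Definition hcoef x (m : nat) : F := (q^-1 * (q - q^-1)) ^+ (m != 0%N) * x ^+ m.
Definition hpoly N x : {poly F} := \poly_(m < N.+1) hcoef x m.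
Definition hprod N xs : {poly F} := \prod_(x <- xs) hpoly N x.

Definition bpoly N b : {poly F} :=
  \poly_(m < N.+1) (if m == 0%N then 1 else (1 - b ^- 2) * Q ^- m).
Definition upoly N b xs : {poly F} := hprod N xs * bpoly N b.

Lemma hcoef0 x : hcoef x 0 = 1.
Proof. by rewrite /hcoef /= !expr0 mulr1. Qed.

Lemma hcoefS x m : hcoef x m.+1 = q^-1 * (q - q^-1) * x ^+ m.+1.
Proof. by rewrite /hcoef /= expr1. Qed.

Lemma prod_hcoef k t (x : 'I_k -> F) (a : {ffun 'I_k -> 'I_t.+1}) :
  \prod_(i < k) hcoef (x i) (a i) = (q^-1 * (q - q^-1)) ^+ plen a * \prod_(i < k) x i ^+ a i.
Proof.
rewrite big_split /= prodrXr; congr (_ ^+ _ * _).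
by rewrite /plen -sum1_card [RHS]big_mkcond; apply: eq_bigr => i _; rewrite inE; case: eqP.
Qed.

Lemma p_t_compositions t xs : (0 < t)%N ->
  (q - q^-1) * p_t q t xs =
  \sum_(a : {ffun 'I_(size xs) -> 'I_t.+1} | (\sum_(i < size xs) a i)%N == t)
     \prod_(i < size xs) hcoef (nth 0 xs i) (a i).
Proof.
move=> t_gt0; rewrite -sum_is_part_perm /p_t mulr_sumr; apply: eq_bigr => l part_l.
rewrite /msym_eval mulrA mulr_sumr; apply: eq_bigr => a perm_al.
rewrite prod_hcoef (plen_perm_eq perm_al); congr (_ * _).
case: (plen l) (plen_gt0 part_l t_gt0) => // n _.
by rewrite exprMn exprVn exprS mulrCA [in RHS]exprS.
Qed.

Lemma coef_hprod t xs : (0 < t)%N -> (hprod t xs)`_t = (q - q^-1) * p_t q t xs.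
Proof.
move=> t_gt0; rewrite p_t_compositions // -(@coef_prod_poly _ _ _ (fun i => hcoef (nth 0 xs i))).
by rewrite /hprod (big_nth 0) big_mkord.
Qed.

Lemma eqmodX_hprod t N xs : (t <= N)%N -> eqmodX t (hprod N xs) (hprod t xs).
Proof.
move=> le_tN; apply: (big_ind2 (eqmodX t)) => [//|p p' r r'|x _ j le_jt].
  exact: eqmodX_mul.
by rewrite !coef_poly !ltnS le_jt (leq_trans le_jt le_tN).
Qed.

Lemma coef0_hprod N xs : (hprod N xs)`_0 = 1.
Proof. by rewrite coef0_prod big1 // => x _; rewrite coef_poly hcoef0. Qed.

Lemma coef_hprod_le N t xs : (0 < t <= N)%N -> (hprod N xs)`_t = (q - q^-1) * p_t q t xs.
Proof. by case/andP=> t_gt0 le_tN; rewrite (eqmodX_hprod xs le_tN) ?coef_hprod. Qed.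

Lemma coef_upoly N b xs t : q - q^-1 != 0 -> (0 < t <= N)%N ->
  (upoly N b xs)`_t = (q - q^-1) * pQ_t Q q b t xs.
Proof.
move=> c_neq0; case: t => // t /= le_tN.
have coef_bpoly m : (0 < m <= N)%N -> (bpoly N b)`_m = (q - q^-1) * (btilde q b * Q ^- m).
  case/andP=> m_gt0 le_mN; rewrite coef_poly ltnS le_mN gtn_eqF // /btilde.
  by rewrite !mulrA mulfV ?mul1r.
have mid : \sum_(i < t) (hprod N xs)`_(lift ord0 i) * (bpoly N b)`_(t.+1 - lift ord0 i)
    = (q - q^-1) * ((q - q^-1) * \sum_(i < t) btilde q b * Q ^- (t.+1 - i.+1) * p_t q i.+1 xs).
  rewrite !mulr_sumr; apply: eq_bigr => i _; have := ltn_ord i; rewrite lift0 => lt_it.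
  rewrite coef_hprod_le ?coef_bpoly /=; try lia.
  by rewrite subSS; ring.
rewrite coefM big_ord_recr big_ord_recl /= subn0 subnn mid coef0_hprod coef_bpoly //.
by rewrite coef_hprod_le // coef_poly /pQ_t big_add1 big_mkord /=; ring.
Qed.

Lemma eqmodX_onemX_hpoly N x : q != 0 ->
  eqmodX N (onemX x * hpoly N x) (onemX (q ^- 2 * x)).
Proof.
move=> q_neq0 j le_jN.
rewrite mulrBl mul1r -mulrA coefB coefCM coefXM !coefB coef1 !coefCM coefX !coef_poly.
case: j le_jN => [|[|j]] le_jN /=; rewrite ?hcoef0 ?hcoefS.
- by rewrite !mulr0.
- by rewrite ltnS le_jN; field.
- by rewrite !ltnS le_jN (ltnW le_jN) exprS; ring.
Qed.

Lemma eqmodX_onemX_bpoly N b :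
  eqmodX N (onemX Q^-1 * bpoly N b) (onemX (b ^- 2 * Q^-1)).
Proof.
move=> j le_jN.
rewrite mulrBl mul1r -mulrA coefB coefCM coefXM !coefB coef1 !coefCM coefX !coef_poly.
case: j le_jN => [|[|j]] le_jN /=.
- by rewrite !mulr0.
- by rewrite ltnS le_jN; ring.
- by rewrite !ltnS le_jN (ltnW le_jN) [Q ^+ j.+2]exprS [(Q * _)^-1]invfM; ring.
Qed.

Lemma eqmodX_upoly N b xs ys : q != 0 ->
  eqmodX N (hden xs * hden ys * onemX Q^-1 * upoly N b xs)
           (hnum q xs * onemX (b ^- 2 * Q^-1) * hden ys).
Proof.
move=> q_neq0.
have -> : hden xs * hden ys * onemX Q^-1 * upoly N b xs
    = (hden xs * hprod N xs) * (onemX Q^-1 * bpoly N b) * hden ys.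
  by rewrite /upoly; ring.
apply: eqmodX_mul _ (eqmodX_refl _); apply: eqmodX_mul _ (eqmodX_onemX_bpoly b).
rewrite /hden /hnum /hprod -big_split; apply: (big_ind2 (eqmodX N)) => //.
  by move=> *; apply: eqmodX_mul.
by move=> x _; apply: eqmodX_onemX_hpoly.
Qed.

Lemma pQ_t_eq_iff b b' xs xs' : q != 0 -> q - q^-1 != 0 ->
  (forall t, (0 < t)%N -> pQ_t Q q b t xs = pQ_t Q q b' t xs') <->
  hnum q xs * onemX (b ^- 2 * Q^-1) * hden xs' = hnum q xs' * onemX (b' ^- 2 * Q^-1) * hden xs.
Proof.
move=> q_neq0 c_neq0; set D := hden xs * hden xs' * onemX Q^-1.
have cross' N : eqmodX N (D * upoly N b' xs') (hnum q xs' * onemX (b' ^- 2 * Q^-1) * hden xs).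
  by rewrite /D [hden xs * _]mulrC; apply: eqmodX_upoly.
split=> [eq_pQ | eq_cross].
  apply: eqmodX_eq => N; apply: eqmodX_trans (eqmodX_sym (eqmodX_upoly b xs xs' q_neq0)) _.
  apply: eqmodX_trans (cross' N); apply: eqmodX_mul (eqmodX_refl _) _.
  case=> [|j] le_jN; first by rewrite !coef0M !coef0_hprod !coef_poly.
  by rewrite !coef_upoly ?eq_pQ.
have eq_upoly N : eqmodX N (upoly N b xs) (upoly N b' xs').
  apply: (eqmodX_mul2l (r := D)); first by rewrite !coef0M !coef0_hden coef0_onemX !mul1r oner_neq0.
  by apply: eqmodX_trans (eqmodX_upoly b xs xs' q_neq0) _; rewrite eq_cross; apply: eqmodX_sym.
move=> t t_gt0; apply: (mulfI c_neq0).
by rewrite -!(coef_upoly (N := t)) ?t_gt0 ?leqnn //; apply: (eq_upoly t t).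
Qed.

End GeneratingSeries.

Section RootsOf.
Variable F : closedFieldType.
Implicit Types phi : {poly F}.

Lemma roots_ofE phi : phi = lead_coef phi *: \prod_(z <- roots_of phi) ('X - z%:P).
Proof. exact: svalP (closed_field_poly_normal phi). Qed.

Lemma size_roots_of phi : phi != 0 -> size (roots_of phi) = (size phi).-1.
Proof.
move=> phi_neq0; rewrite [in RHS](roots_ofE phi) size_scale ?size_prod_XsubC //.
by rewrite lead_coef_eq0.
Qed.

Lemma root_roots_of phi x : phi != 0 -> root phi x = (x \in roots_of phi).
Proof.
move=> phi_neq0; rewrite [in LHS](roots_ofE phi) rootZ ?root_prod_XsubC //.
by rewrite lead_coef_eq0.
Qed.

Lemma eq_scale_prod_XsubC_iff phi phi' (c : F) (ys : seq F) : phi != 0 -> c != 0 ->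
  phi = c^-1 *: (phi' * \prod_(y <- ys) ('X - y%:P)) <->
  lead_coef phi' = lead_coef phi * c /\ perm_eq (roots_of phi) (roots_of phi' ++ ys).
Proof.
move=> phi_neq0 c_neq0; have lead_neq0 : lead_coef phi != 0 by rewrite lead_coef_eq0.
rewrite {1}(roots_ofE phi') -scalerAl scalerA.
split=> [phiE | [lead' perm_roots]].
  have lead' : lead_coef phi' = lead_coef phi * c.
    rewrite [in RHS]phiE lead_coefZ lead_coefM !lead_coef_prod_XsubC !mulr1.
    by rewrite mulrAC mulVf ?mul1r.
  split=> //; apply: prod_XsubC_eq; apply: (scalerI lead_neq0).
  by rewrite -roots_ofE big_cat [in LHS]phiE lead' mulrCA mulVf ?mulr1.
by rewrite lead' mulrCA mulVf ?mulr1 // -big_cat -(perm_big _ perm_roots) -roots_ofE.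
Qed.

End RootsOf.

Section UQ.
Variables (F : closedFieldType) (q Q : F).
Hypotheses (q_neq0 : q != 0) (q_not_root1 : forall n, (0 < n)%N -> q ^+ n != 1).
Implicit Types phi : {poly F}.

Lemma subr_invr_neq0 : q - q^-1 != 0.
Proof.
apply: contra (q_not_root1 (isT : 0 < 2)%N) => /eqP/subr0_eq q_eqV.
by rewrite expr2 {2}q_eqV mulfV.
Qed.

Lemma p_t_nil t : (0 < t)%N -> p_t q t [::] = 0.
Proof.
move=> t_gt0; rewrite /p_t big_pred0 // => l.
by apply/negbTE; rewrite /is_part big_ord0 eq_sym (gtn_eqF t_gt0) andbF.
Qed.

Lemma uQE phi : phi != 0 ->
  uQ Q q phi = (lead_coef phi * q ^+ (size phi).-1,
                fun n => pQ_t Q q (lead_coef phi) n.+1 (roots_of phi)).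
Proof.
move=> phi_neq0; rewrite /uQ; case: eqP => [deg0 | //].
rewrite deg0 expr0 mulr1; congr pair; apply: funext => n.
have /size0nil -> : size (roots_of phi) = 0%N by rewrite size_roots_of.
rewrite /pQ_t p_t_nil // add0r big1_seq ?mulr0 ?addr0 // => z.
by rewrite /= mem_index_iota => /andP[z_gt0 _]; rewrite p_t_nil ?mulr0.
Qed.

Lemma uQ_eq_iff phi phi' : phi != 0 -> phi' != 0 ->
  uQ Q q phi = uQ Q q phi' <->
  lead_coef phi * q ^+ (size phi).-1 = lead_coef phi' * q ^+ (size phi').-1 /\
  hnum q (roots_of phi) * onemX (lead_coef phi ^- 2 * Q^-1) * hden (roots_of phi')
  = hnum q (roots_of phi') * onemX (lead_coef phi' ^- 2 * Q^-1) * hden (roots_of phi).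
Proof.
move=> phi_neq0 phi'_neq0; rewrite uQE // uQE //.
rewrite -(pQ_t_eq_iff Q _ _ _ _ q_neq0 subr_invr_neq0).
split=> [[eq_lead eq_fun] | [eq_lead eq_pQ]].
  by split=> // -[|t] // _; have /= := congr1 (fun f => f t) eq_fun.
by rewrite eq_lead; congr pair; apply: funext => n; apply: eq_pQ.
Qed.

Lemma uQ_eq_iff_roots phi phi' : phi != 0 -> phi' != 0 ->
  ((size phi').-1 <= (size phi).-1)%N ->
  let d := ((size phi).-1 - (size phi').-1)%N in
  uQ Q q phi = uQ Q q phi' <->
  lead_coef phi' = lead_coef phi * q ^+ d /\
  perm_eq (roots_of phi) (roots_of phi' ++ qgeom q (lead_coef phi ^- 2 * Q^-1) d).
Proof.
move=> phi_neq0 phi'_neq0 le_deg d; rewrite uQ_eq_iff //.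
set b := lead_coef phi; set b' := lead_coef phi'; set a := b ^- 2 * Q^-1.
have deg_phi : (size phi).-1 = ((size phi').-1 + d)%N by rewrite subnKC.
have lead_iff : b * q ^+ (size phi).-1 = b' * q ^+ (size phi').-1 <-> b' = b * q ^+ d.
  by rewrite deg_phi exprD mulrA mulrAC; split=> [/(mulIf (expf_neq0 _ q_neq0)) | ->].
have a'E : b' = b * q ^+ d -> b' ^- 2 * Q^-1 = q ^- (2 * d) * a.
  by move=> ->; rewrite /a exprMn invfM -exprM mulnC mulrA [_^-1 * _]mulrC.
rewrite lead_iff; split=> [[b'E eq_cross] | [b'E perm_roots]]; split=> //.
  rewrite a'E // hnum_hden_qgeom_cat in eq_cross.
  apply: (hnum_hden_perm q_neq0 q_not_root1 _ eq_cross).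
  by rewrite size_cat !size_roots_of // size_map size_iota -deg_phi.
by rewrite a'E // hnum_hden_qgeom_cat /hnum /hden !(perm_big _ perm_roots).
Qed.

Lemma uQ_eq_iff_factor phi phi' : phi != 0 -> phi' != 0 ->
  ((size phi').-1 <= (size phi).-1)%N ->
  uQ Q q phi = uQ Q q phi' <->
  phi = q ^- ((size phi).-1 - (size phi').-1) *:
          (phi' * \prod_(1 <= z < ((size phi).-1 - (size phi').-1).+1)
             ('X - (q ^- (2 * z.-1) * (lead_coef phi) ^- 2 * Q^-1)%:P)).
Proof.
move=> phi_neq0 phi'_neq0 le_deg; rewrite uQ_eq_iff_roots //.
set d := ((size phi).-1 - (size phi').-1)%N.
have -> : \prod_(1 <= z < d.+1) ('X - (q ^- (2 * z.-1) * lead_coef phi ^- 2 * Q^-1)%:P)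
    = \prod_(y <- qgeom q (lead_coef phi ^- 2 * Q^-1) d) ('X - y%:P).
  by rewrite big_map big_add1 /= /index_iota subn0; apply: eq_bigr => z _; rewrite mulrA.
by rewrite eq_scale_prod_XsubC_iff // expf_neq0.
Qed.

Lemma uQ_inj_inCQ : {in inCQ Q &, injective (uQ Q q)}.
Proof.
move=> phi phi'; wlog le_deg : phi phi' / ((size phi').-1 <= (size phi).-1)%N.
  move=> inj_le in_phi in_phi' E; case: (leqP (size phi').-1 (size phi).-1) => [le | /ltnW le].
    exact: inj_le.
  exact/esym/inj_le.
rewrite !unfold_in => /andP[phi_neq0 no_root] /andP[phi'_neq0 _].
move=> /(uQ_eq_iff_roots phi_neq0 phi'_neq0 le_deg) [lead' perm_roots].
have d0 : ((size phi).-1 - (size phi').-1 = 0)%N.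
  apply/eqP; apply: contraNT no_root; rewrite -lt0n => d_gt0.
  rewrite root_roots_of // (perm_mem perm_roots) mem_cat -(prednK d_gt0) qgeomS.
  by rewrite mem_head orbT.
rewrite d0 cats0 in perm_roots; rewrite d0 expr0 mulr1 in lead'.
by rewrite (roots_ofE phi) (roots_ofE phi') lead' (perm_big _ perm_roots).
Qed.

Lemma exists_uQ_eq_inCQ phi : phi != 0 -> exists2 phi', inCQ Q phi' & uQ Q q phi = uQ Q q phi'.
Proof.
have [n] := ubnP (size phi); elim: n phi => // n IH phi; rewrite ltnS => size_phi phi_neq0.
set a := lead_coef phi ^- 2 * Q^-1.
have [root_a | no_root] := boolP (root phi a); last by exists phi; rewrite // /inCQ phi_neq0.
have [psi phiE] := factor_theorem _ _ root_a.
have psi_neq0 : psi != 0 by apply: contra_neq phi_neq0 => psi0; rewrite phiE psi0 mul0r.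
have qpsi_neq0 : q *: psi != 0 by rewrite scaler_eq0 negb_or q_neq0.
have size_phi_psi : size phi = (size psi).+1.
  by rewrite phiE size_mul ?polyXsubC_eq0 // size_XsubC addn2.
have d1 : ((size phi).-1 - (size (q *: psi)).-1 = 1)%N.
  have : (0 < size psi)%N by rewrite size_poly_gt0.
  by rewrite size_scale // size_phi_psi; case: (size psi) => // s _; rewrite subSnn.
have E : uQ Q q phi = uQ Q q (q *: psi).
  apply/uQ_eq_iff_factor => //; first by rewrite size_scale // size_phi_psi leq_pred.
  rewrite d1 big_nat1 /= muln0 expr0 invr1 mul1r -/a expr1 -scalerAl scalerA.
  by rewrite mulVf // scale1r.
have [|phi' in_phi' E'] := IH (q *: psi) _ qpsi_neq0; last by exists phi'; rewrite // E.
by rewrite size_scale // -ltnS -size_phi_psi.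
Qed.

End UQ.

Theorem mainTheorem2 (R : realType) (q Q : R[i]) :
  q != 0 -> (forall n : nat, (0 < n)%N -> q ^+ n != 1) -> Q != 0 ->
  (forall phi phi' : {poly R[i]}, phi != 0 -> phi' != 0 ->
     ((size phi').-1 <= (size phi).-1)%N ->
     (uQ Q q phi = uQ Q q phi' <->
      phi = q ^- ((size phi).-1 - (size phi').-1) *:
              (phi' * \prod_(1 <= z < ((size phi).-1 - (size phi').-1).+1)
                 ('X - (q ^- (2 * z.-1) * (lead_coef phi) ^- 2 * Q^-1)%:P))))
  /\ {in inCQ Q &, injective (uQ Q q)}
  /\ (forall phi : {poly R[i]}, phi != 0 ->
        exists! phi' : {poly R[i]}, inCQ Q phi' /\ uQ Q q phi = uQ Q q phi').
Proof.
move=> q_neq0 q_not_root1 _; split; [|split].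
- exact: uQ_eq_iff_factor.
- exact: uQ_inj_inCQ.
move=> phi phi_neq0; have [phi' in_phi' E] := exists_uQ_eq_inCQ Q q_neq0 q_not_root1 phi_neq0.
exists phi'; split=> // phi'' [in_phi'' E''].
exact: (uQ_inj_inCQ (Q := Q) q_neq0 q_not_root1) in_phi' in_phi'' (etrans (esym E) E'').
Qed.
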